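(* Let $n$ run over positive integers such that $m=n^2+1$ satisfies $r_2(m)\le32$, and let $\lambda=m+\delta$ with $0<|\delta|<1/10$; put $R=\sqrt\lambda$ and $w=(0,2)$. Then, for $R$ sufficiently large, $$\sum_{v\in\mathbb{Z}^2}C(v,w)\ \ge\ \frac{2}{\delta^2}+O\Big(\frac{1}{|\delta|}\Big)+\sum_{v\in V_2}S_w(v),$$ with an absolute implied constant.
   Context: $r_2(m)=\#\{\xi\in\mathbb{Z}^2:|\xi|^2=m\}$. For $v\in\mathbb{Z}^2$, $c(v)=\frac{1}{|v|^2-\lambda}$ and $C(v,w)=c(v)c(v+w)$. $V_2=\{v\in\mathbb{Z}^2: C(v,w)<0,\ |v|^2\ne m,\ |v+w|^2\ne m,\ \sqrt R/2\le|\langle v,w\rangle|\le3R\}$. For $v\in\mathbb{Z}^2$, let $\operatorname{Nbr}_w(v)=\{C(v-w,w)+C(v,w),\ C(v,w)+C(v+w,w)\}$ and let $S_w(v)$ be the element of $\operatorname{Nbr}_w(v)$ of smallest absolute value (the smaller one in case of a tie). *)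

From Stdlib Require Import Reals ZArith List Lra.
Open Scope R_scope.

Definition Z2 := (Z * Z)%type.

Definition norm2 (v : Z2) : Z := (fst v * fst v + snd v * snd v)%Z.
Definition addZ2 (v w : Z2) : Z2 := (fst v + fst w, snd v + snd w)%Z.
Definition subZ2 (v w : Z2) : Z2 := (fst v - fst w, snd v - snd w)%Z.
Definition dotZ2 (v w : Z2) : Z := (fst v * fst w + snd v * snd w)%Z.

Definition Zrange (N : nat) : list Z :=
  map (fun k => (Z.of_nat k - Z.of_nat N)%Z) (seq 0 (2 * N + 1)).

(* r_2(m) = #{xi in Z^2 : |xi|^2 = m}; all such xi lie in [-|m|,|m|]^2 *)
Definition r2 (m : Z) : nat :=
  length (filter (fun p : Z2 => Z.eqb (norm2 p) m)
                 (list_prod (Zrange (Z.abs_nat m)) (Zrange (Z.abs_nat m)))).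

Definition c (lam : R) (v : Z2) : R := / (IZR (norm2 v) - lam).
Definition CC (lam : R) (v w : Z2) : R := c lam v * c lam (addZ2 v w).

(* S_w(v): element of Nbr_w(v) of smallest absolute value (smaller one on ties) *)
Definition Sw (lam : R) (w v : Z2) : R :=
  let a := CC lam (subZ2 v w) w + CC lam v w in
  let b := CC lam v w + CC lam (addZ2 v w) w in
  if Rlt_dec (Rabs a) (Rabs b) then a
  else if Rlt_dec (Rabs b) (Rabs a) then b
  else Rmin a b.

Definition inV2 (lam : R) (m : Z) (RR : R) (w v : Z2) : Prop :=
  CC lam v w < 0 /\ norm2 v <> m /\ norm2 (addZ2 v w) <> m /\
  sqrt RR / 2 <= Rabs (IZR (dotZ2 v w)) <= 3 * RR.

Definition inV2_dec (lam : R) (m : Z) (RR : R) (w v : Z2) :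
  {inV2 lam m RR w v} + {~ inV2 lam m RR w v}.
Proof.
  unfold inV2.
  destruct (Rlt_dec (CC lam v w) 0) as [h1|h1]; [|right; tauto].
  destruct (Z.eq_dec (norm2 v) m) as [h2|h2]; [right; tauto|].
  destruct (Z.eq_dec (norm2 (addZ2 v w)) m) as [h3|h3]; [right; tauto|].
  destruct (Rle_dec (sqrt RR / 2) (Rabs (IZR (dotZ2 v w)))) as [h4|h4]; [|right; tauto].
  destruct (Rle_dec (Rabs (IZR (dotZ2 v w))) (3 * RR)) as [h5|h5]; [|right; tauto].
  left; tauto.
Defined.

Definition box_sum (f : Z2 -> R) (N : nat) : R :=
  fold_right Rplus 0
    (map f (list_prod (Zrange N) (Zrange N))).

(* lattice sum over Z^2, as limit of square partial sums
   (agrees with the unconditional sum for absolutely summable f) *)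
Definition lattice_sum_is (f : Z2 -> R) (L : R) : Prop :=
  Un_cv (box_sum f) L.

Definition SwV2 (lam : R) (m : Z) (RR : R) (w v : Z2) : R :=
  if inV2_dec lam m RR w v then Sw lam w v else 0.

(* The box sums of [C(v, w)] converge: [C] is negative only inside a fixed box and is
   dominated by [K / ((1 + a^2)(1 + b^2))] for [v = (a, b)], so the box sums eventually increase
   and stay bounded.  To compare the limit with the sum over [V2], every [v] in [V2] borrows the
   terms [C(v - w)] and [C(v + w)]: these are positive, never borrowed twice, and their sum with
   [C(v)] dominates [S_w(v)], which is one of the two neighbour sums.  After this telescoping
   redistribution the terms are nonnegative, equal to [1 / delta^2] at the two doubly singular
   points [(+-n, -1)], except at most [2 r_2(m) + 4] exceptional points (on the circle
   [|v|^2 = m], one step below it, or at [(+-n, 0)], [(+-n, -2)]), where [|C| <= 2 / |delta|]. *)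

From Stdlib Require Import Reals ZArith List Lra Lia.
Import ListNotations.
Open Scope R_scope.

Fixpoint sumL {X : Type} (l : list X) (f : X -> R) : R :=
  match l with nil => 0 | x :: t => f x + sumL t f end.

Lemma sumL_app {X} (l1 l2 : list X) f : sumL (l1 ++ l2) f = sumL l1 f + sumL l2 f.
Proof. induction l1; simpl; [lra | rewrite IHl1; lra]. Qed.

Lemma sumL_map {X Y} (g : X -> Y) l f : sumL (map g l) f = sumL l (fun x => f (g x)).
Proof. induction l; simpl; [lra | rewrite IHl; lra]. Qed.

Lemma sumL_ext {X} (l : list X) f g : (forall x, f x = g x) -> sumL l f = sumL l g.
Proof. intros H. induction l; simpl; [lra | now rewrite H, IHl]. Qed.

Lemma sumL_le {X} (l : list X) f g :
  (forall x, In x l -> f x <= g x) -> sumL l f <= sumL l g.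
Proof.
  induction l; simpl; intros H; [lra|].
  assert (f a <= g a) by auto. assert (sumL l f <= sumL l g) by auto. lra.
Qed.

Lemma sumL_const0 {X} (l : list X) : sumL l (fun _ => 0) = 0.
Proof. induction l; simpl; [lra | rewrite IHl; lra]. Qed.

Lemma sumL_nonneg {X} (l : list X) f : (forall x, In x l -> 0 <= f x) -> 0 <= sumL l f.
Proof. intros H. rewrite <- (sumL_const0 l). now apply sumL_le. Qed.

Lemma sumL_plus {X} (l : list X) f g : sumL l (fun x => f x + g x) = sumL l f + sumL l g.
Proof. induction l; simpl; [lra | rewrite IHl; lra]. Qed.

Lemma sumL_minus {X} (l : list X) f g : sumL l (fun x => f x - g x) = sumL l f - sumL l g.
Proof. induction l; simpl; [lra | rewrite IHl; lra]. Qed.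

Lemma sumL_scal {X} (l : list X) k f : sumL l (fun x => k * f x) = k * sumL l f.
Proof. induction l; simpl; [lra | rewrite IHl; lra]. Qed.

Lemma sumL_const1 {X} (l : list X) : sumL l (fun _ => 1) = INR (length l).
Proof. induction l; simpl sumL; [simpl; lra|]. rewrite IHl, length_cons, S_INR. lra. Qed.

Lemma sumL_swap {X Y} (l1 : list X) (l2 : list Y) (f : X -> Y -> R) :
  sumL l1 (fun x => sumL l2 (f x)) = sumL l2 (fun y => sumL l1 (fun x => f x y)).
Proof.
  induction l1; simpl.
  - now rewrite sumL_const0.
  - now rewrite IHl1, <- sumL_plus.
Qed.

Lemma sumL_prod {X Y} (A : list X) (B : list Y) f :
  sumL (list_prod A B) f = sumL A (fun a => sumL B (fun b => f (a, b))).
Proof. induction A; simpl; [lra|]. now rewrite sumL_app, sumL_map, IHA. Qed.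

(** * Sums over the boxes [-N,N]^2 *)

Lemma box_sum_sumL f N : box_sum f N = sumL (list_prod (Zrange N) (Zrange N)) f.
Proof.
  unfold box_sum. generalize (list_prod (Zrange N) (Zrange N)).
  induction l; simpl; [lra | rewrite IHl; lra].
Qed.

Lemma box_sum_iter f N :
  box_sum f N = sumL (Zrange N) (fun a => sumL (Zrange N) (fun b => f (a, b))).
Proof. now rewrite box_sum_sumL, sumL_prod. Qed.

Lemma box_sum_le f g N : (forall v, f v <= g v) -> box_sum f N <= box_sum g N.
Proof. intros; rewrite !box_sum_sumL; now apply sumL_le. Qed.

Lemma box_sum_plus f g N : box_sum (fun v => f v + g v) N = box_sum f N + box_sum g N.
Proof. rewrite !box_sum_sumL; apply sumL_plus. Qed.

Lemma box_sum_minus f g N : box_sum (fun v => f v - g v) N = box_sum f N - box_sum g N.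
Proof. rewrite !box_sum_sumL; apply sumL_minus. Qed.

Lemma box_sum_scal f k N : box_sum (fun v => k * f v) N = k * box_sum f N.
Proof. rewrite !box_sum_sumL; apply sumL_scal. Qed.

Definition Zinterval (lo : Z) (len : nat) : list Z :=
  map (fun i => (lo + Z.of_nat i)%Z) (seq 0 len).

Lemma Zrange_Zinterval N : Zrange N = Zinterval (- Z.of_nat N) (2 * N + 1).
Proof. unfold Zrange, Zinterval. apply map_ext. intros; lia. Qed.

Lemma sumL_Zinterval_S_r lo len g :
  sumL (Zinterval lo (S len)) g = sumL (Zinterval lo len) g + g (lo + Z.of_nat len)%Z.
Proof. unfold Zinterval. rewrite seq_S, map_app, sumL_app. simpl. lra. Qed.

Lemma sumL_Zinterval_S_l lo len g :
  sumL (Zinterval lo (S len)) g = g lo + sumL (Zinterval (lo + 1) len) g.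
Proof.
  unfold Zinterval. simpl. rewrite Z.add_0_r. f_equal.
  rewrite <- seq_shift, !sumL_map. apply sumL_ext; intros; f_equal; lia.
Qed.

Lemma sumL_Zinterval_shift lo len g c :
  sumL (Zinterval lo len) (fun k => g (k + c)%Z) = sumL (Zinterval (lo + c) len) g.
Proof. unfold Zinterval. rewrite !sumL_map. apply sumL_ext; intros; f_equal; lia. Qed.

Lemma sumL_Zrange_S N g :
  sumL (Zrange (S N)) g = g (- Z.of_nat (S N))%Z + sumL (Zrange N) g + g (Z.of_nat (S N)).
Proof.
  rewrite !Zrange_Zinterval. replace (2 * S N + 1)%nat with (S (S (2 * N + 1))) by lia.
  rewrite sumL_Zinterval_S_l, sumL_Zinterval_S_r.
  replace (- Z.of_nat (S N) + 1)%Z with (- Z.of_nat N)%Z by lia.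
  replace (- Z.of_nat N + Z.of_nat (2 * N + 1))%Z with (Z.of_nat (S N)) by lia. lra.
Qed.

Section OneDimensionalSupport.
Variables (S0 : nat) (g : Z -> R).
Hypothesis g_supp : forall k, (Z.of_nat S0 < Z.abs k)%Z -> g k = 0.

Lemma sumL_Zinterval_supported len lo :
  (lo <= - Z.of_nat S0)%Z -> (Z.of_nat S0 < lo + Z.of_nat len)%Z ->
  sumL (Zinterval lo len) g = sumL (Zrange S0) g.
Proof.
  revert lo; induction len as [|len IH]; intros lo H1 H2; [lia|].
  destruct (Z_lt_le_dec lo (- Z.of_nat S0)).
  - rewrite sumL_Zinterval_S_l, g_supp, IH by lia. lra.
  - destruct (Z_lt_le_dec (Z.of_nat S0) (lo + Z.of_nat len)).
    + rewrite sumL_Zinterval_S_r, (g_supp (lo + Z.of_nat len)%Z), IH by lia. lra.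
    + rewrite Zrange_Zinterval. replace lo with (- Z.of_nat S0)%Z by lia.
      now replace (S len) with (2 * S0 + 1)%nat by lia.
Qed.

Lemma sumL_Zrange_supported M : (S0 <= M)%nat -> sumL (Zrange M) g = sumL (Zrange S0) g.
Proof. intros. rewrite (Zrange_Zinterval M). apply sumL_Zinterval_supported; lia. Qed.

Lemma sumL_Zrange_shift M c : (Z.of_nat S0 + Z.abs c <= Z.of_nat M)%Z ->
  sumL (Zrange M) (fun k => g (k + c)%Z) = sumL (Zrange M) g.
Proof.
  intros. rewrite (Zrange_Zinterval M), sumL_Zinterval_shift.
  rewrite !sumL_Zinterval_supported by lia. reflexivity.
Qed.

End OneDimensionalSupport.

Definition inbox (S0 : nat) (v : Z2) : Prop :=
  (Z.abs (fst v) <= Z.of_nat S0 /\ Z.abs (snd v) <= Z.of_nat S0)%Z.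

Section BoxSupport.
Variables (S0 : nat) (f : Z2 -> R).
Hypothesis f_supp : forall v, ~ inbox S0 v -> f v = 0.

Lemma box_sum_supported M : (S0 <= M)%nat -> box_sum f M = box_sum f S0.
Proof.
  intros HM. rewrite !box_sum_iter.
  rewrite (sumL_ext (Zrange M) _ (fun a => sumL (Zrange S0) (fun b => f (a, b)))).
  - apply sumL_Zrange_supported; auto. intros k Hk.
    rewrite <- (sumL_const0 (Zrange S0)). apply sumL_ext. intros b.
    apply f_supp. unfold inbox; simpl; lia.
  - intros a. apply sumL_Zrange_supported; auto. intros k Hk.
    apply f_supp. unfold inbox; simpl; lia.
Qed.

Lemma box_sum_shift M (c : Z2) :
  (Z.of_nat S0 + Z.abs (fst c) <= Z.of_nat M)%Z -> (Z.of_nat S0 + Z.abs (snd c) <= Z.of_nat M)%Z ->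
  box_sum (fun v => f (addZ2 v c)) M = box_sum f M.
Proof.
  intros H1 H2. rewrite !box_sum_iter. unfold addZ2; simpl.
  rewrite (sumL_ext (Zrange M) _ (fun a => sumL (Zrange M) (fun b => f ((a + fst c)%Z, b)))).
  - apply (sumL_Zrange_shift S0 (fun a => sumL (Zrange M) (fun b => f (a, b)))); auto.
    intros k Hk. rewrite <- (sumL_const0 (Zrange M)). apply sumL_ext. intros b.
    apply f_supp. unfold inbox; simpl; lia.
  - intros a. apply (sumL_Zrange_shift S0 (fun b => f ((a + fst c)%Z, b))); auto.
    intros k Hk. apply f_supp. unfold inbox; simpl; lia.
Qed.

Lemma lattice_sum_supported : lattice_sum_is f (box_sum f S0).
Proof.
  intros eps Heps. exists S0. intros N HN.
  rewrite box_sum_supported by lia. unfold Rdist. rewrite Rminus_diag, Rabs_R0. lra.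
Qed.

End BoxSupport.

Lemma sumL_Zrange_S_ge N g : (forall k, (Z.of_nat N < Z.abs k)%Z -> 0 <= g k) ->
  sumL (Zrange N) g <= sumL (Zrange (S N)) g.
Proof.
  intros H. rewrite sumL_Zrange_S.
  assert (0 <= g (- Z.of_nat (S N))%Z) by (apply H; lia).
  assert (0 <= g (Z.of_nat (S N))) by (apply H; lia). lra.
Qed.

Lemma box_sum_S_ge f N : (forall v, ~ inbox N v -> 0 <= f v) -> box_sum f N <= box_sum f (S N).
Proof.
  intros H. rewrite !box_sum_iter.
  apply Rle_trans with (sumL (Zrange N) (fun a => sumL (Zrange (S N)) (fun b => f (a, b)))).
  - apply sumL_le. intros a _. apply sumL_Zrange_S_ge.
    intros k Hk. apply H. unfold inbox; simpl; lia.
  - apply sumL_Zrange_S_ge. intros k Hk. apply sumL_nonneg.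
    intros b _. apply H. unfold inbox; simpl; lia.
Qed.

Lemma Un_cv_eventually_growing (u : nat -> R) N0 B :
  (forall N, (N0 <= N)%nat -> u N <= u (S N)) -> (forall N, u N <= B) ->
  exists L, Un_cv u L /\ forall N, (N0 <= N)%nat -> u N <= L.
Proof.
  intros Hg Hb. set (v := fun k => u (N0 + k)%nat).
  assert (Gv : Un_growing v) by (intros k; unfold v; rewrite <- plus_n_Sm; apply Hg; lia).
  assert (Bv : has_ub v) by (exists B; intros x [i ->]; apply Hb).
  destruct (growing_cv v Gv Bv) as [L HL]. exists L. split.
  - intros eps He. destruct (HL eps He) as [K HK]. exists (N0 + K)%nat. intros N HN.
    replace N with (N0 + (N - N0))%nat by lia. apply HK. lia.
  - intros N HN. replace N with (N0 + (N - N0))%nat by lia. apply (growing_ineq v L Gv HL).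
Qed.

Lemma lattice_sum_eventually_nonneg f S0 B :
  (forall v, ~ inbox S0 v -> 0 <= f v) -> (forall N, box_sum f N <= B) ->
  exists L, lattice_sum_is f L /\ forall N, (S0 <= N)%nat -> box_sum f N <= L.
Proof.
  intros Hf HB. apply (Un_cv_eventually_growing _ S0 B); auto.
  intros N HN. apply box_sum_S_ge. intros v Hv. apply Hf.
  intros [H1 H2]. apply Hv. split; lia.
Qed.

Definition inv1sq (k : Z) : R := / (1 + IZR k * IZR k).

Lemma inv1sq_pos k : 0 < inv1sq k.
Proof. unfold inv1sq. apply Rinv_0_lt_compat. nra. Qed.

(* Telescoping against [2 / (N + 1/2)]: [1 / (1 + (N+1)^2) <= 1 / ((N + 1/2)(N + 3/2))]. *)
Lemma sumL_inv1sq_le N : sumL (Zrange N) inv1sq <= 5 - 2 / (INR N + /2).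
Proof.
  induction N.
  - simpl. unfold inv1sq. simpl.
    replace (1 + 0 * 0) with 1 by ring. rewrite Rinv_1.
    replace (2 / (0 + /2)) with 4 by field. lra.
  - rewrite sumL_Zrange_S, S_INR. unfold inv1sq at 1 3.
    rewrite opp_IZR, <- INR_IZR_INZ, S_INR.
    pose proof (pos_INR N).
    assert (/ (1 + (INR N + 1) * (INR N + 1)) <= 1 / (INR N + /2) - 1 / (INR N + 1 + /2)).
    { replace (1 / (INR N + /2) - 1 / (INR N + 1 + /2))
        with (/ ((INR N + /2) * (INR N + 3/2))) by (field; lra).
      apply Rinv_le_contravar; nra. }
    replace (1 + - (INR N + 1) * - (INR N + 1)) with (1 + (INR N + 1) * (INR N + 1)) by ring.
    unfold Rdiv in *. lra.
Qed.

Lemma sumL_inv1sq_bounds N : 0 <= sumL (Zrange N) inv1sq <= 5.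
Proof.
  split.
  - apply sumL_nonneg. intros; left; apply inv1sq_pos.
  - pose proof (sumL_inv1sq_le N). pose proof (pos_INR N).
    assert (0 < 2 / (INR N + /2)) by (apply Rdiv_lt_0_compat; lra). lra.
Qed.

Lemma box_sum_le_decay f K N : 0 <= K ->
  (forall v, f v <= K * (inv1sq (fst v) * inv1sq (snd v))) -> box_sum f N <= 25 * K.
Proof.
  intros HK Hf. eapply Rle_trans; [apply box_sum_le; exact Hf|].
  rewrite box_sum_scal, box_sum_iter. simpl.
  rewrite (sumL_ext _ _ (fun a => sumL (Zrange N) inv1sq * inv1sq a))
    by (intros; rewrite sumL_scal; ring).
  rewrite sumL_scal. pose proof (sumL_inv1sq_bounds N).
  assert (sumL (Zrange N) inv1sq * sumL (Zrange N) inv1sq <= 25) by nra. nra.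
Qed.

Definition Z2_eq_dec (u v : Z2) : {u = v} + {u <> v}.
Proof. decide equality; apply Z.eq_dec. Defined.

Definition dirac (y v : Z2) : R := if Z2_eq_dec v y then 1 else 0.

Lemma dirac_ne y v : v <> y -> dirac y v = 0.
Proof. intros; unfold dirac; destruct Z2_eq_dec; [congruence | reflexivity]. Qed.

Lemma dirac_bounds y v : 0 <= dirac y v <= 1.
Proof. unfold dirac; destruct Z2_eq_dec; lra. Qed.

Lemma sumL_dirac_notin y l : ~ In y l -> sumL l (dirac y) = 0.
Proof.
  induction l; simpl; intros H; [lra|].
  rewrite dirac_ne, IHl by tauto. lra.
Qed.

Lemma sumL_dirac_NoDup y l : NoDup l -> sumL l (dirac y) = if in_dec Z2_eq_dec y l then 1 else 0.
Proof.
  induction l as [|a l IH]; intros Hl; [simpl; lra|]. inversion_clear Hl as [|? ? Ha Hl'].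
  cbn [sumL]. unfold dirac at 1. destruct Z2_eq_dec as [->|Hne].
  - rewrite sumL_dirac_notin by auto.
    destruct (in_dec Z2_eq_dec y (y :: l)) as [_|Hn]; [lra | exfalso; apply Hn, in_eq].
  - rewrite IH by auto.
    destruct (in_dec Z2_eq_dec y l), (in_dec Z2_eq_dec y (a :: l)); simpl in *; try lra; intuition.
Qed.

Lemma NoDup_Zrange N : NoDup (Zrange N).
Proof.
  unfold Zrange. apply NoDup_map_NoDup_ForallPairs; [|apply seq_NoDup].
  intros x y _ _ E. lia.
Qed.

Lemma NoDup_list_prod {X Y} (A : list X) (B : list Y) :
  NoDup A -> NoDup B -> NoDup (list_prod A B).
Proof.
  induction A; simpl; intros HA HB; [constructor|]. inversion_clear HA.
  apply NoDup_app; auto.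
  - apply NoDup_map_NoDup_ForallPairs; auto. intros x y _ _ E; congruence.
  - intros [x y] G1 G2. apply in_map_iff in G1. destruct G1 as [z [E _]].
    inversion E; subst. apply in_prod_iff in G2. tauto.
Qed.

Lemma in_Zrange k N : In k (Zrange N) <-> (Z.abs k <= Z.of_nat N)%Z.
Proof.
  unfold Zrange. rewrite in_map_iff. split.
  - intros [i [E Hi]]. apply in_seq in Hi. lia.
  - intros H. exists (Z.to_nat (k + Z.of_nat N)). rewrite in_seq. lia.
Qed.

Lemma box_sum_dirac y N : box_sum (dirac y) N <= 1.
Proof.
  rewrite box_sum_sumL, sumL_dirac_NoDup by (apply NoDup_list_prod; apply NoDup_Zrange).
  destruct in_dec; lra.
Qed.

Lemma box_sum_dirac_in y N : inbox N y -> box_sum (dirac y) N = 1.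
Proof.
  intros [H1 H2].
  rewrite box_sum_sumL, sumL_dirac_NoDup by (apply NoDup_list_prod; apply NoDup_Zrange).
  destruct in_dec as [|Hn]; [reflexivity|]. exfalso. apply Hn.
  destruct y. apply in_prod; apply in_Zrange; auto.
Qed.

Lemma box_sum_sumL_swap {X} (l : list X) (f : X -> Z2 -> R) N :
  box_sum (fun v => sumL l (fun y => f y v)) N = sumL l (fun y => box_sum (f y) N).
Proof. rewrite box_sum_sumL, sumL_swap. apply sumL_ext. intros; now rewrite box_sum_sumL. Qed.

Lemma Rinv_mult_neg x y : / x * / y < 0 -> x * y < 0.
Proof.
  intros H. rewrite <- Rinv_mult in H.
  destruct (Rlt_le_dec (x * y) 0) as [|[Hp|H0]]; auto.
  - pose proof (Rinv_0_lt_compat _ Hp). lra.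
  - rewrite <- H0, Rinv_0 in H. lra.
Qed.

Lemma Rinv_mult_pos x y : 0 < x * y -> 0 < / x * / y.
Proof. intros H. rewrite <- Rinv_mult. now apply Rinv_0_lt_compat. Qed.

Lemma addZ2_subZ2 v w : addZ2 (subZ2 v w) w = v.
Proof. destruct v, w; unfold addZ2, subZ2; simpl; f_equal; lia. Qed.

Lemma subZ2_addZ2 v w : subZ2 (addZ2 v w) w = v.
Proof. destruct v, w; unfold addZ2, subZ2; simpl; f_equal; lia. Qed.

Lemma Sw_le_sum_nbrs lam w v :
  0 <= CC lam (subZ2 v w) w -> 0 <= CC lam (addZ2 v w) w ->
  Sw lam w v <= CC lam (subZ2 v w) w + CC lam v w + CC lam (addZ2 v w) w.
Proof.
  intros H1 H2. unfold Sw; cbv zeta.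
  destruct Rlt_dec; [lra|]. destruct Rlt_dec; [lra|].
  pose proof (Rmin_l (CC lam (subZ2 v w) w + CC lam v w) (CC lam v w + CC lam (addZ2 v w) w)). lra.
Qed.

Definition gap (lam : R) (v : Z2) : R := IZR (norm2 v) - lam.

Lemma CC_gap lam v w : CC lam v w = / gap lam v * / gap lam (addZ2 v w).
Proof. reflexivity. Qed.

Definition w0 : Z2 := (0%Z, 2%Z).

Lemma gap_pair lam a b : gap lam (a, b) = IZR a * IZR a + IZR b * IZR b - lam.
Proof. unfold gap, norm2; simpl. rewrite plus_IZR, !mult_IZR. ring. Qed.

Lemma gap_up lam a b : gap lam (addZ2 (a, b) w0) = gap lam (a, b) + 4 * IZR b + 4.
Proof. unfold gap, addZ2, norm2, w0; simpl. rewrite !plus_IZR, !mult_IZR, !plus_IZR. ring. Qed.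

Lemma gap_down lam a b : gap lam (subZ2 (a, b) w0) = gap lam (a, b) - 4 * IZR b + 4.
Proof. unfold gap, subZ2, norm2, w0; simpl. rewrite !plus_IZR, !mult_IZR, !minus_IZR. ring. Qed.

Lemma gap_up2 lam a b :
  gap lam (addZ2 (addZ2 (a, b) w0) w0) = gap lam (a, b) + 8 * IZR b + 16.
Proof. unfold gap, addZ2, norm2, w0; simpl. rewrite !plus_IZR, !mult_IZR, !plus_IZR. ring. Qed.

Lemma dotZ2_w0 v : dotZ2 v w0 = (2 * snd v)%Z.
Proof. unfold dotZ2, w0; cbn [fst snd]. lia. Qed.

Lemma abs_dotZ2_w0 v : Rabs (IZR (dotZ2 v w0)) = 2 * IZR (Z.abs (snd v)).
Proof. rewrite dotZ2_w0, Rabs_Zabs, Z.abs_mul, mult_IZR. reflexivity. Qed.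

Lemma box_sum_telescope f S0 M c : (forall v, ~ inbox S0 v -> f v = 0) ->
  (Z.of_nat S0 + Z.abs (fst c) <= Z.of_nat M)%Z -> (Z.of_nat S0 + Z.abs (snd c) <= Z.of_nat M)%Z ->
  box_sum (fun v => f v - f (addZ2 v c)) M = 0.
Proof. intros. rewrite box_sum_minus, (box_sum_shift S0) by auto. ring. Qed.

Lemma sumL_dirac_ge1 v l : In v l -> 1 <= sumL l (fun y => dirac y v).
Proof.
  induction l as [|a l IH]; simpl; [tauto|]. intros Hv.
  assert (0 <= sumL l (fun y => dirac y v)) by (apply sumL_nonneg; intros; apply dirac_bounds).
  destruct Hv as [->|Hv].
  - unfold dirac at 1. destruct Z2_eq_dec; [lra | congruence].
  - pose proof (dirac_bounds a v). specialize (IH Hv). lra.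
Qed.

Lemma straddle_classification (n a b : Z) : (5 <= n)%Z ->
  (16 * (b * b) <= n \/ 3 * n < 2 * Z.abs b)%Z ->
  (a * a + b * b < n * n + 1 < a * a + (b + 2) * (b + 2) \/
   a * a + (b + 2) * (b + 2) < n * n + 1 < a * a + b * b)%Z ->
  (a = n \/ a = - n)%Z /\ (b = 0 \/ b = -2)%Z.
Proof.
  intros Hn Hb Hs.
  assert (Hsq : ((b + 2) * (b + 2) <= 2 * (b * b) + 8)%Z)
    by (pose proof (Z.square_nonneg (b - 2)); lia).
  destruct Hb as [Hb|Hb].
  - assert (Ha : Z.abs a = n).
    { destruct (Z_le_gt_dec (Z.abs a) (n - 1)) as [Ha|Ha].
      - assert (a * a <= (n - 1) * (n - 1))%Z by nia. nia.
      - destruct (Z.eq_dec (Z.abs a) n); auto.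
        assert ((n + 1) * (n + 1) <= a * a)%Z by nia. nia. }
    assert (a * a = n * n)%Z by nia.
    split; [lia | nia].
  - exfalso. assert (n + 1 <= Z.abs b)%Z by lia. assert (n + 1 <= Z.abs (b + 2))%Z by lia. nia.
Qed.

(** * The lattice sum of [C(v, w)] for [w = (0, 2)] *)

Section Corollary.
Variables (n : Z) (delta : R).
Hypothesis n_pos : (0 < n)%Z.
Hypothesis delta_small : 0 < Rabs delta < 1 / 10.
Let m := (n * n + 1)%Z.
Let lam := IZR m + delta.

Lemma delta_bounds : - (1 / 10) < delta < 1 / 10.
Proof. destruct (Rabs_def2 delta (1 / 10)); [apply delta_small | split; assumption]. Qed.

Lemma gap_eq v : gap lam v = IZR (norm2 v - m) - delta.
Proof. unfold gap, lam. rewrite minus_IZR. ring. Qed.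

Lemma gap_abs_ge_delta v : Rabs delta <= Rabs (gap lam v).
Proof.
  rewrite gap_eq. destruct (Z.eq_dec (norm2 v - m) 0) as [E|E].
  - rewrite E, Rminus_0_l, Rabs_Ropp. lra.
  - assert (1 <= Rabs (IZR (norm2 v - m))) by (rewrite Rabs_Zabs; apply IZR_le; lia).
    pose proof (Rabs_triang_inv (IZR (norm2 v - m)) delta). lra.
Qed.

Lemma gap_abs_ge_nonsingular v : norm2 v <> m -> 9 / 10 <= Rabs (gap lam v).
Proof.
  intros Hv. rewrite gap_eq.
  assert (1 <= Rabs (IZR (norm2 v - m))) by (rewrite Rabs_Zabs; apply IZR_le; lia).
  pose proof (Rabs_triang_inv (IZR (norm2 v - m)) delta). lra.
Qed.

Lemma gap_neg_norm2_le v : gap lam v < 0 -> (norm2 v <= m)%Z.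
Proof.
  rewrite gap_eq. intros H. pose proof delta_bounds.
  assert (Hlt : IZR (norm2 v - m) < 1) by lra. apply lt_IZR in Hlt. lia.
Qed.

Lemma gap_pos_norm2_ge v : 0 < gap lam v -> (m <= norm2 v)%Z.
Proof.
  rewrite gap_eq. intros H. pose proof delta_bounds.
  assert (Hlt : -1 < IZR (norm2 v - m)) by lra. apply lt_IZR in Hlt. lia.
Qed.

Lemma CC_neg_gaps v w : CC lam v w < 0 -> gap lam v * gap lam (addZ2 v w) < 0.
Proof. rewrite CC_gap. apply Rinv_mult_neg. Qed.

Lemma CC_neg_norm2_le v w : CC lam v w < 0 -> (norm2 v <= m \/ norm2 (addZ2 v w) <= m)%Z.
Proof.
  intros H. destruct (Rmult_neg_cases _ _ (CC_neg_gaps v w H)) as [[_ H1]|[H1 _]];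
    [right|left]; now apply gap_neg_norm2_le.
Qed.

Lemma CC_neg_straddle v w : CC lam v w < 0 -> norm2 v <> m -> norm2 (addZ2 v w) <> m ->
  (norm2 v < m < norm2 (addZ2 v w) \/ norm2 (addZ2 v w) < m < norm2 v)%Z.
Proof.
  intros H Hv Hvw.
  destruct (Rmult_neg_cases _ _ (CC_neg_gaps v w H)) as [[H1 H2]|[H1 H2]].
  - apply gap_pos_norm2_ge in H1. apply gap_neg_norm2_le in H2. lia.
  - apply gap_neg_norm2_le in H1. apply gap_pos_norm2_ge in H2. lia.
Qed.

Lemma CC_abs_le v w : Rabs (CC lam v w) <= / Rabs delta * / Rabs delta.
Proof.
  rewrite CC_gap, Rabs_mult, !Rabs_inv.
  pose proof (gap_abs_ge_delta v). pose proof (gap_abs_ge_delta (addZ2 v w)).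
  apply Rmult_le_compat; try (left; apply Rinv_0_lt_compat; lra); apply Rinv_le_contravar; lra.
Qed.

(* One factor of [C] is at most [1 / |delta|], the other at most [10 / 9]. *)
Lemma CC_abs_le_nonsingular v w : ~ (norm2 v = m /\ norm2 (addZ2 v w) = m) ->
  Rabs (CC lam v w) <= 2 / Rabs delta.
Proof.
  intros H. rewrite CC_gap, Rabs_mult, !Rabs_inv.
  assert (Hxy : forall x y, Rabs delta <= x -> 9 / 10 <= y -> / x * / y <= 2 / Rabs delta).
  { intros x y Hx Hy. assert (/ x <= / Rabs delta) by (apply Rinv_le_contravar; lra).
    assert (/ y <= 10 / 9) by (replace (10 / 9) with (/ (9 / 10)) by field;
                                apply Rinv_le_contravar; lra).
    assert (0 < / x) by (apply Rinv_0_lt_compat; lra).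
    assert (0 < / y) by (apply Rinv_0_lt_compat; lra). unfold Rdiv. nra. }
  destruct (Z.eq_dec (norm2 v) m) as [E|E].
  - apply Hxy; [apply gap_abs_ge_delta | apply gap_abs_ge_nonsingular; tauto].
  - rewrite Rmult_comm. apply Hxy; [apply gap_abs_ge_delta | now apply gap_abs_ge_nonsingular].
Qed.

Definition p1 : Z2 := (n, (-1)%Z).
Definition p2 : Z2 := ((-n)%Z, (-1)%Z).

Lemma p1_neq_p2 : p1 <> p2.
Proof. unfold p1, p2; intros E; inversion E; lia. Qed.

Lemma doubly_singular v : norm2 v = m -> norm2 (addZ2 v w0) = m -> v = p1 \/ v = p2.
Proof.
  destruct v as [a b]. unfold norm2, addZ2, w0, p1, p2, m; simpl. intros H1 H2.
  assert (b = -1)%Z by nia. subst.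
  assert ((a - n) * (a + n) = 0)%Z by nia.
  apply Z.mul_eq_0 in H. destruct H; [left | right]; f_equal; lia.
Qed.

Lemma CC_doubly_singular v : v = p1 \/ v = p2 -> CC lam v w0 = / (delta * delta).
Proof.
  intros Hv. rewrite CC_gap.
  assert (gap lam v = - delta /\ gap lam (addZ2 v w0) = - delta) as [-> ->].
  { rewrite !gap_eq. destruct Hv as [->| ->]; unfold p1, p2, norm2, addZ2, w0, m; simpl;
      split; replace (_ - _)%Z with 0%Z by ring; simpl; ring. }
  rewrite <- Rinv_mult. f_equal. ring.
Qed.

Lemma lam_pos : 0 < lam.
Proof.
  unfold lam, m. rewrite plus_IZR, mult_IZR. pose proof delta_bounds.
  pose proof (Rle_0_sqr (IZR n)). unfold Rsqr in *. lra.
Qed.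

Definition decay_const : R := 32 + (4 * lam + 17) * (4 * lam + 17) * (/ Rabs delta * / Rabs delta).

(* Near the origin use [CC_abs_le]; far away both gaps are comparable to [|v|^2]. *)
Lemma CC_le_decay v : CC lam v w0 <= decay_const * (inv1sq (fst v) * inv1sq (snd v)).
Proof.
  destruct v as [a b]. unfold inv1sq; simpl.
  set (A := IZR a). set (B := IZR b).
  assert (HP : 0 < (1 + A * A) * (1 + B * B)) by (apply Rmult_lt_0_compat; nra).
  rewrite <- Rinv_mult.
  assert (D0 : 0 < / Rabs delta * / Rabs delta)
    by (apply Rmult_lt_0_compat; apply Rinv_0_lt_compat; lra).
  cut (CC lam (a, b) w0 * ((1 + A * A) * (1 + B * B)) <= decay_const).
  { intros H. apply (Rmult_le_reg_r ((1 + A * A) * (1 + B * B))); auto.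
    rewrite Rmult_assoc, Rinv_l by lra. lra. }
  pose proof lam_pos.
  destruct (Rle_dec (A * A + B * B) (4 * lam + 16)) as [Hs|Hs].
  - pose proof (CC_abs_le (a, b) w0). pose proof (Rle_abs (CC lam (a, b) w0)).
    assert ((1 + A * A) * (1 + B * B) <= (4 * lam + 17) * (4 * lam + 17)) by nra.
    unfold decay_const. nra.
  - rewrite CC_gap, gap_up, gap_pair. fold A B.
    set (x1 := A * A + B * B - lam). set (x2 := x1 + 4 * B + 4).
    assert (3 * (A * A + B * B) / 4 <= x1) by (unfold x1; lra).
    assert ((A * A + B * B) / 4 <= x2) by (unfold x2, x1; nra).
    assert (Hp : 0 < x1 * x2) by nra.
    rewrite <- Rinv_mult.
    assert ((1 + A * A) * (1 + B * B) <= 6 * (x1 * x2)) by nra.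
    assert (/ (x1 * x2) * ((1 + A * A) * (1 + B * B)) <= 6).
    { apply (Rmult_le_reg_l (x1 * x2)); auto. rewrite <- Rmult_assoc, Rinv_r by lra. lra. }
    unfold decay_const. nra.
Qed.

Lemma K0_nonneg : 0 <= decay_const.
Proof.
  unfold decay_const. pose proof lam_pos.
  assert (0 < / Rabs delta * / Rabs delta)
    by (apply Rmult_lt_0_compat; apply Rinv_0_lt_compat; lra). nra.
Qed.

Definition neg_radius : nat := (Z.to_nat n + 2)%nat.

Lemma CC_neg_inbox v : CC lam v w0 < 0 -> inbox neg_radius v.
Proof.
  intros H. apply CC_neg_norm2_le in H. destruct v as [a b].
  unfold inbox, neg_radius, norm2, addZ2, w0, m in *; simpl in *.
  assert (forall x y, (x * x + y * y <= n * n + 1 -> Z.abs x <= n /\ Z.abs y <= n)%Z)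
    as Hdisk by (intros x y Hxy; split; nia).
  destruct H as [H|H]; apply Hdisk in H; lia.
Qed.

Let RR := sqrt lam.
Hypothesis RR_large : 256 <= RR.

Lemma RR_sq : RR * RR = lam.
Proof. apply sqrt_sqrt. left; apply lam_pos. Qed.

Lemma RR_between : IZR n < RR <= IZR n + 1.
Proof.
  pose proof RR_sq as Hsq. pose proof delta_bounds. unfold lam, m in Hsq.
  rewrite plus_IZR, mult_IZR in Hsq. assert (1 <= IZR n) by (apply IZR_le; lia).
  assert (0 < RR) by lra. split; nra.
Qed.

Lemma n_large : (255 <= n)%Z.
Proof. pose proof RR_between. apply le_IZR. lra. Qed.

Lemma sqrt_RR_large : 16 <= sqrt RR.
Proof. replace 16 with (sqrt (16 * 16)) by (apply sqrt_square; lra). apply sqrt_le_1; lra. Qed.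

Lemma V2_window_snd v : sqrt RR / 2 <= Rabs (IZR (dotZ2 v w0)) -> (4 <= Z.abs (snd v))%Z.
Proof.
  rewrite abs_dotZ2_w0. intros H. pose proof sqrt_RR_large. apply le_IZR. lra.
Qed.

Lemma outside_V2_window_snd v : ~ (sqrt RR / 2 <= Rabs (IZR (dotZ2 v w0)) <= 3 * RR) ->
  (16 * (snd v * snd v) <= n \/ 3 * n < 2 * Z.abs (snd v))%Z.
Proof.
  rewrite abs_dotZ2_w0. intros H. pose proof RR_between.
  set (t := IZR (Z.abs (snd v))) in *.
  assert (Ht : 0 <= t) by (apply IZR_le; lia).
  destruct (Rlt_le_dec (2 * t) (sqrt RR / 2)) as [Hs|Hs].
  - left. assert (Ht2 : t * t * 16 < IZR n + 1).
    { pose proof (sqrt_sqrt RR ltac:(lra)). pose proof (sqrt_pos RR). nra. }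
    unfold t in Ht2. rewrite <- !mult_IZR, <- plus_IZR in Ht2. apply lt_IZR in Ht2. nia.
  - right. assert (3 * RR < 2 * t) by (apply Rnot_le_lt; intro; apply H; split; assumption).
    apply lt_IZR. rewrite !mult_IZR. fold t. lra.
Qed.

Lemma V2_snd v : inV2 lam m RR w0 v -> (4 <= Z.abs (snd v))%Z.
Proof. intros (_ & _ & _ & H & _). now apply V2_window_snd. Qed.

(* Along the column of [v] the gaps move monotonically away from the sign change at [v]. *)
Lemma V2_nbrs_pos v : inV2 lam m RR w0 v ->
  0 < CC lam (subZ2 v w0) w0 /\ 0 < CC lam (addZ2 v w0) w0.
Proof.
  intros H. pose proof (V2_snd v H) as Hb. pose proof (CC_neg_gaps v w0 (proj1 H)) as Hg.
  destruct v as [a b]. simpl in Hb.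
  rewrite !CC_gap, addZ2_subZ2, gap_down, gap_up2. rewrite gap_up in *.
  apply Rmult_neg_cases in Hg.
  destruct (Z_le_gt_dec 0 b).
  - assert (4 <= IZR b) by (apply IZR_le; lia). split; apply Rinv_mult_pos; nra.
  - assert (IZR b <= -4) by (apply IZR_le; lia). split; apply Rinv_mult_pos; nra.
Qed.

Lemma V2_not_both v : inV2 lam m RR w0 (subZ2 v w0) -> ~ inV2 lam m RR w0 (addZ2 v w0).
Proof.
  intros H1 H2. pose proof (V2_snd _ H1) as Hb1. pose proof (V2_snd _ H2) as Hb2.
  apply proj1, CC_neg_gaps, Rmult_neg_cases in H1.
  apply proj1, CC_neg_gaps, Rmult_neg_cases in H2.
  destruct v as [a b]. simpl in Hb1, Hb2.
  rewrite addZ2_subZ2, gap_down in H1. rewrite gap_up2, gap_up in H2.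
  destruct (Z_le_gt_dec 0 b).
  - assert (6 <= IZR b) by (apply IZR_le; lia). nra.
  - assert (IZR b <= -6) by (apply IZR_le; lia). nra.
Qed.

Lemma nonsingular_of_snd v : snd v <> (-1)%Z -> v <> p1 /\ v <> p2.
Proof. intros Hv. unfold p1, p2. split; intros ->; simpl in Hv; lia. Qed.

Definition L1 : list Z2 := filter (fun p : Z2 => Z.eqb (norm2 p) m)
  (list_prod (Zrange (Z.abs_nat m)) (Zrange (Z.abs_nat m))).

Lemma in_L1 v : norm2 v = m -> In v L1.
Proof.
  intros H. unfold L1. apply filter_In. split; [|now apply Z.eqb_eq].
  destruct v as [a b]. unfold norm2 in H; simpl in H.
  assert (Z.of_nat (Z.abs_nat m) = m) by (unfold m; lia).
  apply in_prod; apply in_Zrange; rewrite H0; nia.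
Qed.

Definition exceptional : list Z2 :=
  L1 ++ map (fun p => subZ2 p w0) L1 ++ [(n, 0%Z); (n, (-2)%Z); ((-n)%Z, 0%Z); ((-n)%Z, (-2)%Z)].

Lemma length_exceptional : (length exceptional = 2 * r2 m + 4)%nat.
Proof.
  unfold exceptional. rewrite !length_app, length_map.
  change (length L1) with (r2 m). simpl. lia.
Qed.

Lemma CC_neg_exceptional v : CC lam v w0 < 0 -> ~ inV2 lam m RR w0 v -> In v exceptional.
Proof.
  intros HC HV. unfold exceptional. rewrite !in_app_iff.
  destruct (Z.eq_dec (norm2 v) m) as [E1|E1]; [left; now apply in_L1|].
  destruct (Z.eq_dec (norm2 (addZ2 v w0)) m) as [E2|E2].
  { right; left. apply in_map_iff. exists (addZ2 v w0).
    split; [apply subZ2_addZ2 | now apply in_L1]. }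
  right; right.
  assert (Hw : ~ (sqrt RR / 2 <= Rabs (IZR (dotZ2 v w0)) <= 3 * RR)) by (unfold inV2 in HV; tauto).
  pose proof (CC_neg_straddle v w0 HC E1 E2) as Hs. apply outside_V2_window_snd in Hw.
  pose proof n_large. destruct v as [a b]. unfold norm2, addZ2, w0, m in Hs; simpl in Hs, Hw.
  destruct (straddle_classification n a b) as [[-> | ->] [-> | ->]]; try lia; simpl; tauto.
Qed.

Definition wm : Z2 := (0%Z, (-2)%Z).

Lemma subZ2_w0 v : subZ2 v w0 = addZ2 v wm.
Proof. destruct v; unfold subZ2, addZ2, w0, wm; simpl; f_equal; lia. Qed.

Definition borrow (e v : Z2) : R :=
  if inV2_dec lam m RR w0 v then CC lam (addZ2 v e) w0 else 0.

Definition redistributed (v : Z2) : R :=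
  CC lam v w0 + (borrow w0 v - borrow w0 (addZ2 v wm))
    + (borrow wm v - borrow wm (addZ2 v w0)).

Lemma borrow_supported e v : ~ inbox neg_radius v -> borrow e v = 0.
Proof.
  intros Hv. unfold borrow. destruct inV2_dec as [H|]; [|reflexivity].
  exfalso. apply Hv, CC_neg_inbox, H.
Qed.

Lemma box_sum_redistributed N : (neg_radius + 2 <= N)%nat ->
  box_sum redistributed N = box_sum (fun v => CC lam v w0) N.
Proof.
  intros HN. unfold redistributed. rewrite !box_sum_plus.
  rewrite !(box_sum_telescope _ neg_radius) by (apply borrow_supported || (simpl; lia)). ring.
Qed.

Definition exc_count (v : Z2) : R := sumL exceptional (fun y => dirac y v).

(* A pointwise minorant of [redistributed - SwV2];
   its box sums are [2 / delta^2 - O(1 / |delta|)]. *)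
Definition model (v : Z2) : R :=
  / (delta * delta) * (dirac p1 v + dirac p2 v) - 2 / Rabs delta * exc_count v.

Lemma two_over_delta_pos : 0 < 2 / Rabs delta.
Proof. apply Rdiv_lt_0_compat; lra. Qed.

Lemma exc_count_nonneg v : 0 <= exc_count v.
Proof. apply sumL_nonneg. intros; apply dirac_bounds. Qed.

Lemma model_nonpos v : v <> p1 -> v <> p2 -> model v <= 0.
Proof.
  intros H1 H2. unfold model. rewrite !dirac_ne by auto.
  pose proof (exc_count_nonneg v). pose proof two_over_delta_pos. nra.
Qed.

Lemma model_exceptional v : v <> p1 -> v <> p2 -> In v exceptional -> model v <= - (2 / Rabs delta).
Proof.
  intros H1 H2 H3. unfold model. rewrite !dirac_ne by auto.
  pose proof (sumL_dirac_ge1 v exceptional H3). pose proof two_over_delta_pos.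
  unfold exc_count. nra.
Qed.

Lemma model_doubly_singular v : v = p1 \/ v = p2 -> model v <= / (delta * delta).
Proof.
  intros H. unfold model. pose proof (exc_count_nonneg v). pose proof two_over_delta_pos.
  assert (dirac p1 v + dirac p2 v = 1) as ->.
  { pose proof p1_neq_p2. unfold dirac.
    destruct H as [-> | ->]; do 2 destruct Z2_eq_dec; try congruence; lra. }
  nra.
Qed.

Lemma redistributed_in_V2 v : inV2 lam m RR w0 v ->
  SwV2 lam m RR w0 v + model v <= redistributed v.
Proof.
  intros HV. destruct (V2_nbrs_pos v HV) as [Hd Hu].
  pose proof (Sw_le_sum_nbrs lam w0 v (Rlt_le _ _ Hd) (Rlt_le _ _ Hu)) as HSw.
  destruct (nonsingular_of_snd v) as [Hp1 Hp2]; [pose proof (V2_snd v HV); lia|].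
  pose proof (model_nonpos v Hp1 Hp2) as Hmodel.
  unfold redistributed, SwV2, borrow. rewrite <- !subZ2_w0.
  destruct (inV2_dec lam m RR w0 v) as [_|]; [|tauto].
  destruct (inV2_dec lam m RR w0 (subZ2 v w0)) as [[Hneg _]|]; [lra|].
  destruct (inV2_dec lam m RR w0 (addZ2 v w0)) as [[Hneg _]|]; [lra|].
  lra.
Qed.

Lemma redistributed_below_V2 v : inV2 lam m RR w0 (subZ2 v w0) ->
  SwV2 lam m RR w0 v + model v <= redistributed v.
Proof.
  intros HV. pose proof (V2_not_both v HV) as Hup.
  destruct (V2_nbrs_pos _ HV) as [_ Hv]. rewrite addZ2_subZ2 in Hv.
  destruct (nonsingular_of_snd v) as [Hp1 Hp2].
  { pose proof (V2_snd _ HV). destruct v; simpl in *. lia. }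
  pose proof (model_nonpos v Hp1 Hp2) as Hmodel.
  unfold redistributed, SwV2, borrow. rewrite <- !subZ2_w0, addZ2_subZ2.
  destruct (inV2_dec lam m RR w0 v) as [[Hneg _]|]; [lra|].
  destruct (inV2_dec lam m RR w0 (subZ2 v w0)); [|tauto].
  destruct (inV2_dec lam m RR w0 (addZ2 v w0)); [tauto|].
  lra.
Qed.

Lemma redistributed_above_V2 v : inV2 lam m RR w0 (addZ2 v w0) ->
  SwV2 lam m RR w0 v + model v <= redistributed v.
Proof.
  intros HV.
  assert (Hdown : ~ inV2 lam m RR w0 (subZ2 v w0)) by (intros H; now apply (V2_not_both v)).
  destruct (V2_nbrs_pos _ HV) as [Hv _]. rewrite subZ2_addZ2 in Hv.
  destruct (nonsingular_of_snd v) as [Hp1 Hp2].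
  { pose proof (V2_snd _ HV). destruct v; simpl in *. lia. }
  pose proof (model_nonpos v Hp1 Hp2) as Hmodel.
  unfold redistributed, SwV2, borrow. rewrite <- !subZ2_w0, subZ2_addZ2.
  destruct (inV2_dec lam m RR w0 v) as [[Hneg _]|]; [lra|].
  destruct (inV2_dec lam m RR w0 (subZ2 v w0)); [tauto|].
  destruct (inV2_dec lam m RR w0 (addZ2 v w0)); [|tauto].
  lra.
Qed.

Lemma redistributed_away_V2 v : ~ inV2 lam m RR w0 v -> ~ inV2 lam m RR w0 (subZ2 v w0) ->
  ~ inV2 lam m RR w0 (addZ2 v w0) -> SwV2 lam m RR w0 v + model v <= redistributed v.
Proof.
  intros H0 Hd Hu.
  assert (SwV2 lam m RR w0 v + model v <= CC lam v w0) as Hle.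
  - unfold SwV2. destruct inV2_dec; [tauto|]. rewrite Rplus_0_l.
    destruct (Z2_eq_dec v p1) as [E|E1]; [|destruct (Z2_eq_dec v p2) as [E|E2]].
    1, 2: rewrite CC_doubly_singular by auto; apply model_doubly_singular; auto.
    destruct (Rlt_le_dec (CC lam v w0) 0) as [Hn|Hn]; [|pose proof (model_nonpos v E1 E2); lra].
    pose proof (model_exceptional v E1 E2 (CC_neg_exceptional v Hn H0)).
    assert (Hns : ~ (norm2 v = m /\ norm2 (addZ2 v w0) = m))
      by (intros [F1 F2]; destruct (doubly_singular v F1 F2); tauto).
    pose proof (CC_abs_le_nonsingular v w0 Hns). pose proof (Rle_abs (- CC lam v w0)) as Habs.
    rewrite Rabs_Ropp in Habs. lra.
  - unfold redistributed, borrow. rewrite <- !subZ2_w0.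
    destruct (inV2_dec lam m RR w0 v); [tauto|].
    destruct (inV2_dec lam m RR w0 (subZ2 v w0)); [tauto|].
    destruct (inV2_dec lam m RR w0 (addZ2 v w0)); [tauto|]. lra.
Qed.

Lemma redistributed_ge v : SwV2 lam m RR w0 v + model v <= redistributed v.
Proof.
  destruct (inV2_dec lam m RR w0 v); [now apply redistributed_in_V2|].
  destruct (inV2_dec lam m RR w0 (subZ2 v w0)); [now apply redistributed_below_V2|].
  destruct (inV2_dec lam m RR w0 (addZ2 v w0)); [now apply redistributed_above_V2|].
  now apply redistributed_away_V2.
Qed.

Hypothesis r2_small : (r2 m <= 32)%nat.

Lemma box_sum_model_ge N : (Z.to_nat n <= N)%nat ->
  2 / delta ^ 2 - 136 / Rabs delta <= box_sum model N.
Proof.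
  intros HN. unfold model, exc_count.
  rewrite box_sum_minus, !box_sum_scal, box_sum_plus, box_sum_sumL_swap.
  rewrite !box_sum_dirac_in by (unfold inbox, p1, p2; simpl; lia).
  assert (Hcount : sumL exceptional (fun y => box_sum (dirac y) N) <= 68).
  { eapply Rle_trans; [apply sumL_le; intros; apply box_sum_dirac|].
    rewrite sumL_const1, length_exceptional. apply le_INR in r2_small.
    rewrite plus_INR, mult_INR. simpl in *. lra. }
  assert (delta <> 0) by (intros E; rewrite E, Rabs_R0 in delta_small; lra).
  replace (2 / delta ^ 2) with (/ (delta * delta) * (1 + 1)) by (field; auto).
  pose proof two_over_delta_pos. unfold Rdiv in *. nra.
Qed.

Lemma lattice_sums_compare : exists Lsum LV2 : R,
  lattice_sum_is (fun v => CC lam v w0) Lsum /\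
  lattice_sum_is (SwV2 lam m RR w0) LV2 /\
  Lsum >= 2 / delta ^ 2 - 136 / Rabs delta + LV2.
Proof.
  set (N := (neg_radius + 2)%nat).
  destruct (lattice_sum_eventually_nonneg (fun v => CC lam v w0) neg_radius (25 * decay_const))
    as [Lsum [HL Hge]].
  { intros v Hv. apply Rnot_lt_le. intros H. now apply Hv, CC_neg_inbox. }
  { intros M. apply box_sum_le_decay; [apply K0_nonneg | apply CC_le_decay]. }
  assert (Hsupp : forall v, ~ inbox neg_radius v -> SwV2 lam m RR w0 v = 0).
  { intros v Hv. unfold SwV2. destruct inV2_dec as [H|]; [|reflexivity].
    exfalso. now apply Hv, CC_neg_inbox, H. }
  exists Lsum, (box_sum (SwV2 lam m RR w0) neg_radius).
  split; [exact HL|]. split; [now apply lattice_sum_supported|].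
  assert (H1 : box_sum redistributed N <= Lsum)
    by (rewrite box_sum_redistributed by lia; apply Hge; lia).
  assert (H2 : box_sum (fun v => SwV2 lam m RR w0 v + model v) N <= box_sum redistributed N)
    by (apply box_sum_le, redistributed_ge).
  rewrite box_sum_plus, (box_sum_supported neg_radius) in H2 by (auto; lia).
  pose proof (box_sum_model_ge N ltac:(unfold N, neg_radius; lia)). lra.
Qed.

End Corollary.

Theorem corollary5p3 :
  exists K R0 : R,
  forall (n : Z) (delta : R),
    (0 < n)%Z ->
    (r2 (n * n + 1)%Z <= 32)%nat ->
    0 < Rabs delta < 1 / 10 ->
    let m := (n * n + 1)%Z in
    let lam := IZR m + delta in
    let RR := sqrt lam in
    let w : Z2 := (0%Z, 2%Z) in
    R0 <= RR ->
    exists (Lsum LV2 E : R),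
      lattice_sum_is (fun v => CC lam v w) Lsum /\
      lattice_sum_is (SwV2 lam m RR w) LV2 /\
      Rabs E <= K / Rabs delta /\
      Lsum >= 2 / (delta ^ 2) + E + LV2.
Proof.
  exists 136, 256. intros n delta Hn Hr2 Hd m lam RR w HR.
  destruct (lattice_sums_compare n delta Hn Hd HR Hr2) as (Lsum & LV2 & HL & HV & Hge).
  exists Lsum, LV2, (- (136 / Rabs delta)).
  split; [exact HL|]. split; [exact HV|]. split; [|exact Hge].
  rewrite Rabs_Ropp, Rabs_right; [lra|]. left; apply Rdiv_lt_0_compat; lra.
Qed.
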